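(* Let $R$ be a commutative ring, $I=(f_1,\dots,f_r)$, $\mathfrak a=(a_1,\dots,a_s)\subseteq I$, $\Phi=(c_{ij})$ an $r\times s$ matrix with $a_j=\sum_ic_{ij}f_i$, and $\Gamma_\bullet$ as in the context. Let $\langle Z_1(\mathbf f;R)\rangle$ denote the $R$-subalgebra of $K_\bullet(\mathbf f;R)$ generated by the Koszul cycles of degree one. Then $$\langle\Gamma_\bullet\cdot\langle Z_1(\mathbf f;R)\rangle\rangle_r=\operatorname{Fitt}_0(I/\mathfrak a).$$ In particular, if the algebra of Koszul cycles $Z_\bullet(\mathbf f;R)$ is generated by cycles of degree one, then $\operatorname{Kitt}(\mathfrak a,I)=\operatorname{Fitt}_0(I/\mathfrak a)$.
   Context: $K_\bullet(\mathbf f;R)$ is the Koszul DG algebra: exterior algebra over $R$ on $e_1,\dots,e_r$ with $\partial e_i=f_i$. $\zeta_j=\sum_ic_{ij}e_i$, $\Gamma_\bullet$ the subalgebra generated by $\zeta_1,\dots,\zeta_s$, $Z_\bullet=Z_\bullet(\mathbf f;R)$ the subalgebra of cycles. For graded subalgebras $A_\bullet,B_\bullet$, $\langle A_\bullet\cdot B_\bullet\rangle_r$ is the degree-$r$ part of the subalgebra they generate, i.e. the span of $x\wedge y$ with $x\in A_j$, $y\in B_{r-j}$, identified with an ideal of $R$ via $K_r=Re_1\wedge\cdots\wedge e_r\cong R$. $\operatorname{Kitt}(\mathfrak a,I):=\langle\Gamma_\bullet\cdot Z_\bullet\rangle_r$. $\operatorname{Fitt}_0$ is the zeroth Fitting ideal.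 *)

From HB Require Import structures.
From mathcomp Require Import all_boot all_order all_algebra.
Set Implicit Arguments. Unset Strict Implicit. Unset Printing Implicit Defensive.
Import GRing.Theory.
Local Open Scope ring_scope.

Definition is_ideal (R : comPzRingType) (J : R -> Prop) : Prop :=
  [/\ J 0, (forall x y, J x -> J y -> J (x + y)) & (forall a x, J x -> J (a * x))].

Definition ideal_gen (R : comPzRingType) (G : R -> Prop) : R -> Prop :=
  fun c => forall J, is_ideal J -> (forall y, G y -> J y) -> J c.

(* ---------- Exterior algebra  /\ R^r  with basis e_S, S ⊆ {0..r-1} ---------- *)
Definition ext (R : comPzRingType) (r : nat) := {ffun {set 'I_r} -> R}.

Definition ext_add (R : comPzRingType) (r : nat) (x y : ext R r) : ext R r := [ffun S => x S + y S].
Definition ext_scale (R : comPzRingType) (r : nat) (a : R) (x : ext R r) : ext R r := [ffun S => a * x S].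
Definition ext_one (R : comPzRingType) (r : nat) : ext R r := [ffun S => if S == set0 then 1 else 0].
Definition ext_e (R : comPzRingType) (r : nat) (i : 'I_r) : ext R r := [ffun S => if S == [set i] then 1 else 0].

(* sign of e_S /\ e_T = wsign S T * e_(S ∪ T) for disjoint S T:
   (-1)^(number of pairs s in S, t in T with t < s) *)
Definition wsign (R : comPzRingType) (r : nat) (S T : {set 'I_r}) : R :=
  (-1) ^+ #|[set p : 'I_r * 'I_r | [&& p.1 \in S, p.2 \in T & (val p.2 < val p.1)%N]]|.

Definition wedge (R : comPzRingType) (r : nat) (x y : ext R r) : ext R r :=
  [ffun U : {set 'I_r} => \sum_(S : {set 'I_r}) \sum_(T : {set 'I_r} | [disjoint S & T] && (S :|: T == U))
               wsign R S T * x S * y T].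

Definition homog (R : comPzRingType) (r : nat) (d : nat) (x : ext R r) : Prop := forall S : {set 'I_r}, #|S| != d -> x S = 0.

(* Koszul differential, d e_i = f_i, extended as a graded derivation:
   d(e_{t_1} /\ ... /\ e_{t_k}) = sum_k (-1)^(k-1) f_{t_k} e_{T \ t_k} *)
Definition koszul_d (R : comPzRingType) (r : nat) (f : 'I_r -> R) (x : ext R r) : ext R r :=
  [ffun S : {set 'I_r} => \sum_(i : 'I_r | i \notin S)
               (-1) ^+ #|[set t in S | (val t < val i)%N]| * f i * x (i |: S)].

Definition subalg_closed (R : comPzRingType) (r : nat) (P : ext R r -> Prop) : Prop :=
  [/\ P (ext_one R r),
      (forall x y, P x -> P y -> P (ext_add x y)),
      (forall a x, P x -> P (ext_scale a x)) &
      (forall x y, P x -> P y -> P (wedge x y))].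

Definition subalg_gen (R : comPzRingType) (r : nat) (G : ext R r -> Prop) : ext R r -> Prop :=
  fun x => forall P, subalg_closed P -> (forall y, G y -> P y) -> P x.

(* < A . B >_r : degree-r part of the algebra generated by A and B, i.e. the span of
   x /\ y with x in A_j, y in B_(r-j), identified with an ideal of R via K_r = R e_1..e_r *)
Definition prod_top (R : comPzRingType) (r : nat) (A B : ext R r -> Prop) : R -> Prop :=
  ideal_gen (fun c => exists (j : nat) (x y : ext R r),
     [/\ (j <= r)%N, A x /\ homog j x, B y /\ homog (r - j) y & c = wedge x y setT]).

Definition zeta (R : comPzRingType) (r : nat) s (c : 'M[R]_(r, s)) (j : 'I_s) : ext R r :=
  [ffun S : {set 'I_r} => \sum_(i : 'I_r) c i j * ext_e R i S].

Definition Gamma (R : comPzRingType) (r : nat) s (c : 'M[R]_(r, s)) : ext R r -> Prop :=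
  subalg_gen (fun x => exists j, x = zeta c j).

Definition cycles (R : comPzRingType) (r : nat) (f : 'I_r -> R) : ext R r -> Prop := fun x => koszul_d f x = 0.

Definition Z1 (R : comPzRingType) (r : nat) (f : 'I_r -> R) : ext R r -> Prop := fun x => homog 1 x /\ koszul_d f x = 0.
Definition Z1alg (R : comPzRingType) (r : nat) (f : 'I_r -> R) : ext R r -> Prop := subalg_gen (Z1 f).

Definition Kitt (R : comPzRingType) (r : nat) s (c : 'M[R]_(r, s)) (f : 'I_r -> R) : R -> Prop :=
  prod_top (Gamma c) (cycles f).

(* ---------- Fitt_0 (I / a) ----------
   I / a is generated by the images of f_1..f_r; its relation module is
   { v in R^r | sum_i v_i f_i in a }.  Fitt_0 is the ideal generated by the
   r x r minors of matrices whose columns are relations. *)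
Definition ideal_of_gens (R : comPzRingType) (s : nat) (a : 'I_s -> R) : R -> Prop :=
  ideal_gen (fun y => exists j, y = a j).

Definition quot_relation (R : comPzRingType) (r : nat) s (f : 'I_r -> R) (a : 'I_s -> R) (v : 'I_r -> R) : Prop :=
  ideal_of_gens a (\sum_i v i * f i).

Definition Fitt0_quot (R : comPzRingType) (r : nat) s (f : 'I_r -> R) (a : 'I_s -> R) : R -> Prop :=
  ideal_gen (fun c => exists M : 'M[R]_r,
     (forall k : 'I_r, quot_relation f a (fun i => M i k)) /\ c = \det M).

From Pilot Require Import Defs.
From mathcomp Require Import all_boot all_order all_algebra.
From mathcomp Require Import ring zify.
Set Implicit Arguments. Unset Strict Implicit. Unset Printing Implicit Defensive.
Import GRing.Theory.
Local Open Scope ring_scope.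

(* Everything happens in the R-span of the wedge products v_1 /\ ... /\ v_k of degree-one
   elements whose coefficient vectors are relations of I/a, i.e. [\sum_i v_i f_i \in a].
   This span is a subalgebra containing the zeta_j and the degree-one cycles, and its top
   degree is spanned by determinants of r x r relation matrices, which generate Fitt_0(I/a).
   Conversely, if [\sum_i v_i f_i = \sum_j b_j a_j] then v - \sum_j b_j zeta_j is a cycle, so
   a wedge of r relations expands into products of zetas and degree-one cycles, the zetas
   being moved to the front by graded commutativity.  For Kitt, products of degree-one
   cycles are cycles by the Leibniz rule. *)

Section FinsetFacts.
Variable T : finType.
Implicit Types A B C : {set T}.

Lemma disjoint_setUl A B C :
  [disjoint A :|: B & C] = [disjoint A & C] && [disjoint B & C].
Proof. by rewrite -!setI_eq0 setIUl setU_eq0. Qed.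

Lemma disjoint_setUr A B C :
  [disjoint C & A :|: B] = [disjoint C & A] && [disjoint C & B].
Proof. by rewrite -!setI_eq0 setIUr setU_eq0. Qed.

End FinsetFacts.

Lemma card_ord_lt n (a : 'I_n) : #|[set b : 'I_n | (b < a)%N]| = a.
Proof.
have le_an : (a <= n)%N by apply: ltnW.
have inj_widen : injective (widen_ord le_an) by move=> b c /(congr1 val) /= /val_inj.
rewrite -[RHS]card_ord -cardsT -(card_imset _ inj_widen).
apply: eq_card => b; rewrite inE; apply/idP/imsetP => [lt_ba|[c _ ->] /=]; last exact: ltn_ord.
by exists (Ordinal lt_ba); [rewrite inE | apply: val_inj].
Qed.

Section ExteriorAlgebra.
Variables (R : comPzRingType) (r : nat).
Local Notation E := (ext R r).
Local Notation T := {set 'I_r}.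
Implicit Types (x y z : E) (S U V W : T).

Definition inversions S U : nat :=
  #|[set p : 'I_r * 'I_r | [&& p.1 \in S, p.2 \in U & (p.2 < p.1)%N]]|.

Lemma wsignE S U : wsign R S U = (-1) ^+ inversions S U.
Proof. by []. Qed.

Lemma inversions0l U : inversions set0 U = 0%N.
Proof. by apply/eqP; rewrite cards_eq0; apply/eqP/setP => p; rewrite !inE. Qed.

Lemma inversions0r U : inversions U set0 = 0%N.
Proof. by apply/eqP; rewrite cards_eq0; apply/eqP/setP => p; rewrite !inE andbF. Qed.

Lemma inversionsUl S V U : [disjoint S & V] ->
  inversions (S :|: V) U = (inversions S U + inversions V U)%N.
Proof.
move=> dSV; rewrite /inversions -cardsUI; set C := _ :&: _.
have -> : C = set0.
  apply/setP => p; rewrite !inE.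
  by case pS: (p.1 \in S); rewrite //= (disjointFr dSV pS) andbF.
by rewrite cards0 addn0; apply: eq_card => p; rewrite !inE andb_orl.
Qed.

Lemma inversionsUr S V U : [disjoint V & U] ->
  inversions S (V :|: U) = (inversions S V + inversions S U)%N.
Proof.
move=> dVU; rewrite /inversions -cardsUI; set C := _ :&: _.
have -> : C = set0.
  apply/setP => p; rewrite !inE.
  by case pV: (p.2 \in V); rewrite ?andbF //= (disjointFr dVU pV) !andbF.
by rewrite cards0 addn0; apply: eq_card => p; rewrite !inE andb_orl andb_orr.
Qed.

Lemma inversions_swap S V : [disjoint S & V] ->
  (inversions S V + inversions V S)%N = (#|S| * #|V|)%N.
Proof.
move=> dSV; rewrite /inversions -cardsX.
set B := [set p : 'I_r * 'I_r | [&& p.1 \in V, p.2 \in S & _]].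
have -> : #|B| = #|[set p : 'I_r * 'I_r | [&& p.1 \in S, p.2 \in V & (p.1 < p.2)%N]]|.
  rewrite -(card_preimset B (f := fun p : 'I_r * 'I_r => (p.2, p.1))); last first.
    by move=> [p1 p2] [q1 q2] /= [-> ->].
  by apply: eq_card => p; rewrite !inE /= andbCA.
rewrite -cardsUI; set C := _ :&: _.
have -> : C = set0.
  apply/setP => p; rewrite !inE.
  by case: ltngtP; rewrite ?andbF.
rewrite cards0 addn0; apply: eq_card => -[p1 p2]; rewrite !inE /=.
case p1S: (p1 \in S) => //=; case p2V: (p2 \in V) => //=.
have : p1 != p2 by apply: contraTneq p2V => <-; rewrite (disjointFr dSV p1S).
by rewrite neq_ltn orbC.
Qed.

Lemma wedgeDl x y z : wedge (ext_add x y) z = ext_add (wedge x z) (wedge y z).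
Proof.
apply/ffunP=> U; rewrite !ffunE -big_split; apply: eq_bigr => S _.
by rewrite -big_split; apply: eq_bigr => V _; rewrite /= ffunE; ring.
Qed.

Lemma wedgeDr x y z : wedge x (ext_add y z) = ext_add (wedge x y) (wedge x z).
Proof.
apply/ffunP=> U; rewrite !ffunE -big_split; apply: eq_bigr => S _.
by rewrite -big_split; apply: eq_bigr => V _; rewrite /= ffunE; ring.
Qed.

Lemma wedgeZl a x y : wedge (ext_scale a x) y = ext_scale a (wedge x y).
Proof.
apply/ffunP=> U; rewrite !ffunE mulr_sumr; apply: eq_bigr => S _.
by rewrite mulr_sumr; apply: eq_bigr => V _; rewrite ffunE; ring.
Qed.

Lemma wedgeZr a x y : wedge x (ext_scale a y) = ext_scale a (wedge x y).
Proof.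
apply/ffunP=> U; rewrite !ffunE mulr_sumr; apply: eq_bigr => S _.
by rewrite mulr_sumr; apply: eq_bigr => V _; rewrite ffunE; ring.
Qed.

Lemma wedge1l x : wedge (ext_one R r) x = x.
Proof.
apply/ffunP=> U; rewrite ffunE (bigD1 set0) //= [X in _ + X]big1 => [|S nS].
  rewrite addr0 (big_pred1 U) => [|V]; last by rewrite -setI_eq0 set0I eqxx set0U.
  by rewrite ffunE eqxx wsignE inversions0l !mul1r.
by rewrite big1 // => V _; rewrite ffunE (negPf nS) mulr0 mul0r.
Qed.

Lemma wedge1r x : wedge x (ext_one R r) = x.
Proof.
apply/ffunP=> U; rewrite ffunE (bigD1 U) //= [X in _ + X]big1 => [|S nS].
  rewrite addr0 (big_pred1 set0) => [|V]; last first.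
    apply/andP/eqP => [[dUV /eqP eU]|->]; last by rewrite -setI_eq0 setI0 setU0.
    by rewrite -(setIidPr (_ : V \subset U)) ?disjoint_setI0 // -eU subsetUr.
  by rewrite ffunE eqxx wsignE inversions0r mulr1 mul1r.
rewrite big1 // => V /andP[_ /eqP eU]; rewrite ffunE.
by case: eqP => [V0|]; [move: nS; rewrite -eU V0 setU0 eqxx | rewrite mulr0].
Qed.

Lemma sum_if_eq (F : T -> R) (P : pred T) W :
  \sum_(S : T) (if P S && (W == S) then F S else 0) = if P W then F W else 0.
Proof.
rewrite (bigD1 W) //= eqxx andbT big1 ?addr0 // => S nS.
by rewrite eq_sym (negPf nS) andbF.
Qed.

Definition triple_wedge x y z U : R :=
  \sum_(S : T) \sum_(V : T) \sum_(C : T)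
    (if [&& [disjoint S & V], [disjoint S & C], [disjoint V & C] & S :|: V :|: C == U]
     then (-1) ^+ (inversions S V + inversions S C + inversions V C) * (x S * y V * z C)
     else 0).

Lemma wedge_wedgel x y z U : wedge (wedge x y) z U = triple_wedge x y z U.
Proof.
pose G (A C S V : T) :=
  if ([disjoint A & C] && (A :|: C == U)) && ([disjoint S & V] && (S :|: V == A))
  then wsign R A C * wsign R S V * (x S * y V * z C) else 0.
transitivity (\sum_(A : T) \sum_(C : T) \sum_(S : T) \sum_(V : T) G A C S V).
  rewrite ffunE; apply: eq_bigr => A _; rewrite big_mkcond; apply: eq_bigr => C _.
  rewrite /G; case: ifP => _ /=; last by rewrite big1 // => S _; rewrite big1.
  rewrite ffunE mulr_sumr mulr_suml; apply: eq_bigr => S _.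
  rewrite mulr_sumr mulr_suml big_mkcond; apply: eq_bigr => V _.
  by case: ifP => _; rewrite ?mulr0 ?mul0r //; ring.
rewrite exchange_big; under eq_bigr do rewrite exchange_big.
rewrite exchange_big; apply: eq_bigr => S _.
under eq_bigr do rewrite exchange_big; rewrite exchange_big; apply: eq_bigr => V _.
apply: eq_bigr => C _; rewrite /G.
rewrite (eq_bigr (fun A : T => if [&& [disjoint A & C], A :|: C == U & [disjoint S & V]]
  && (S :|: V == A) then wsign R A C * wsign R S V * (x S * y V * z C) else 0)) => [|A _];
  last by rewrite !andbA.
rewrite sum_if_eq disjoint_setUl.
case: (boolP [disjoint S & V]) => dSV; last by rewrite !andbF.
rewrite /= andbT -andbA.
by case: ifP => // /and3P[dSC _ _]; rewrite !wsignE inversionsUl // -!exprD addnC addnA.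
Qed.

Lemma wedge_wedger x y z U : wedge x (wedge y z) U = triple_wedge x y z U.
Proof.
pose G (S W V C : T) :=
  if ([disjoint S & W] && (S :|: W == U)) && ([disjoint V & C] && (V :|: C == W))
  then wsign R S W * wsign R V C * (x S * y V * z C) else 0.
transitivity (\sum_(S : T) \sum_(W : T) \sum_(V : T) \sum_(C : T) G S W V C).
  rewrite ffunE; apply: eq_bigr => S _; rewrite big_mkcond; apply: eq_bigr => W _.
  rewrite /G; case: ifP => _ /=; last by rewrite big1 // => V _; rewrite big1.
  rewrite ffunE mulr_sumr; apply: eq_bigr => V _.
  rewrite mulr_sumr big_mkcond; apply: eq_bigr => C _.
  by case: ifP => _; rewrite ?mulr0 //; ring.
apply: eq_bigr => S _; rewrite exchange_big; apply: eq_bigr => V _.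
rewrite exchange_big; apply: eq_bigr => C _; rewrite /G.
rewrite (eq_bigr (fun W : T => if [&& [disjoint S & W], S :|: W == U & [disjoint V & C]]
  && (V :|: C == W) then wsign R S W * wsign R V C * (x S * y V * z C) else 0)) => [|W _];
  last by rewrite !andbA.
rewrite sum_if_eq disjoint_setUr setUA.
case: (boolP [disjoint V & C]) => dVC; last by rewrite !andbF.
rewrite !andbT -!andbA.
by case: ifP => // /and3P[_ dSC _]; rewrite !wsignE inversionsUr // -!exprD.
Qed.

Lemma wedgeA x y z : wedge (wedge x y) z = wedge x (wedge y z).
Proof. by apply/ffunP => U; rewrite wedge_wedgel wedge_wedger. Qed.

Lemma wedgeC j k x y : homog j x -> homog k y ->
  wedge x y = ext_scale ((-1) ^+ (j * k)) (wedge y x).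
Proof.
move=> hx hy; apply/ffunP => U; rewrite !ffunE mulr_sumr.
rewrite (exchange_big_dep (fun V => true)) //=; apply: eq_bigr => V _.
rewrite mulr_sumr; apply: eq_big => [S|S /andP[dSV _]].
  by rewrite disjoint_sym setUC.
have [->|xSn] := eqVneq (x S) 0; first by rewrite !(mulr0, mul0r).
have [->|yVn] := eqVneq (y V) 0; first by rewrite !(mulr0, mul0r).
have <- : #|S| = j by apply/eqP; apply: contraNT xSn => /hx ->.
have <- : #|V| = k by apply/eqP; apply: contraNT yVn => /hy ->.
rewrite -(inversions_swap dSV) !wsignE exprD.
have sq1 : (-1) ^+ inversions V S * (-1) ^+ inversions V S = 1 :> R.
  by rewrite -expr2 sqrr_sign.
transitivity ((-1) ^+ inversions S V * ((-1) ^+ inversions V S * (-1) ^+ inversions V S)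
  * x S * y V); first by rewrite sq1 mulr1.
ring.
Qed.

End ExteriorAlgebra.

Section DegreeOne.
Variables (R : comPzRingType) (r : nat).
Local Notation E := (ext R r).
Local Notation T := {set 'I_r}.
Implicit Types (u v w : 'I_r -> R) (X : E) (S U : T).

Definition ext_vec v : E := [ffun S => \sum_i v i * ext_e R i S].

Definition sign_below S (i : 'I_r) : R := (-1) ^+ #|[set t in S | (t < i)%N]|.

Lemma ext_vecE v S : ext_vec v S = \sum_i if S == [set i] then v i else 0.
Proof.
by rewrite ffunE; apply: eq_bigr => i _; rewrite ffunE; case: ifP; rewrite ?mulr1 ?mulr0.
Qed.

Lemma ext_vec_homog v : homog 1 (ext_vec v).
Proof.
move=> S nS; rewrite ext_vecE big1 // => i _; case: ifP => // /eqP eS.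
by move: nS; rewrite eS cards1.
Qed.

Lemma eq_ext_vec u w : (forall i, u i = w i) -> ext_vec u = ext_vec w.
Proof. by move=> e; apply/ffunP => S; rewrite !ffunE; apply: eq_bigr => i _; rewrite e. Qed.

Lemma ext_vecD u w : ext_vec (fun i => u i + w i) = ext_add (ext_vec u) (ext_vec w).
Proof.
by apply/ffunP => S; rewrite !ffunE -big_split; apply: eq_bigr => i _; rewrite mulrDl.
Qed.

Lemma ext_vecZ b u : ext_vec (fun i => b * u i) = ext_scale b (ext_vec u).
Proof.
by apply/ffunP => S; rewrite !ffunE mulr_sumr; apply: eq_bigr => i _; rewrite mulrA.
Qed.

Lemma inversions1l i S : inversions [set i] S = #|[set t in S | (t < i)%N]|.
Proof.
rewrite /inversions -[RHS](card_imset _ (f := fun t => (i, t))); last by move=> t1 t2 [].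
apply: eq_card => -[p1 p2]; rewrite !inE /=.
apply/idP/imsetP => [/and3P[/eqP -> p2S lt]|[t]]; first by exists p2; rewrite // inE p2S.
by rewrite inE => /andP[tS lt] [-> ->]; rewrite eqxx tS.
Qed.

Lemma sign_belowU1 S i : sign_below (i |: S) i = sign_below S i.
Proof.
rewrite /sign_below; congr (_ ^+ _); apply: eq_card => t; rewrite !inE.
by case: (eqVneq t i) => [->|] /=; rewrite ?ltnn ?andbF.
Qed.

Lemma sign_belowD1 S i : sign_below (S :\ i) i = sign_below S i.
Proof.
rewrite /sign_below; congr (_ ^+ _); apply: eq_card => t; rewrite !inE.
by case: (eqVneq t i) => [->|] /=; rewrite ?ltnn ?andbF.
Qed.

Lemma wedge_vecE v X U :
  wedge (ext_vec v) X U = \sum_(i in U) sign_below U i * v i * X (U :\ i).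
Proof.
rewrite ffunE.
under eq_bigr => S _ do under eq_bigr => V _ do rewrite ext_vecE mulr_sumr mulr_suml.
under eq_bigr => S _ do rewrite exchange_big.
rewrite exchange_big [RHS]big_mkcond; apply: eq_bigr => i _.
rewrite (bigD1 [set i]) //= [X in _ + X]big1 ?addr0 => [|S nS]; last first.
  by rewrite big1 // => V _; rewrite (negPf nS) mulr0 mul0r.
under eq_bigr => V _ do rewrite eqxx.
case: ifP => iU; last first.
  by rewrite big1 // => V /andP[_ /eqP eU]; move: iU; rewrite -eU setU11.
rewrite (big_pred1 (U :\ i)) => [|V]; last first.
  rewrite /= disjoints1; apply/andP/eqP => [[iV /eqP <-]|->]; first by rewrite setU1K.
  by rewrite setD11 setD1K.
by rewrite wsignE inversions1l -(sign_belowD1 U).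
Qed.

Definition wedge_vecs (vs : seq ('I_r -> R)) : E :=
  foldr (fun v X => wedge (ext_vec v) X) (ext_one R r) vs.

Lemma wedge_vecs_cat us ws : wedge_vecs (us ++ ws) = wedge (wedge_vecs us) (wedge_vecs ws).
Proof. by elim: us => [|u us IH] /=; rewrite ?wedge1l // IH wedgeA. Qed.

Lemma wedge_vecs_homog vs : homog (size vs) (wedge_vecs vs).
Proof.
elim: vs => [|v vs IH] /= S nS.
  by rewrite ffunE; case: eqP => // S0; move: nS; rewrite S0 cards0.
rewrite wedge_vecE big1 // => i iS; rewrite IH ?mulr0 //.
by apply: contra nS; rewrite (cardsD1 i S) iS add1n => /eqP ->.
Qed.

(* Laplace expansion along the first column matches the recursion of [wedge_vecE]. *)
Lemma wedge_vecs_minor k vs (h : 'I_k -> 'I_r) : size vs = k ->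
  {mono h : a b / (a < b)%N} ->
  wedge_vecs vs (h @: setT) = \det (\matrix_(i, j < k) (nth (fun _ => 0) vs j) (h i)).
Proof.
elim: k vs h => [|k IH] [|v vs] h //= sz hmono.
  have -> : h @: setT = set0 by apply/setP => t; rewrite inE; apply/imsetP => -[[]].
  by rewrite ffunE eqxx det_mx00.
case: sz => sz.
have hinj : injective h.
  move=> a b e; apply/val_inj.
  by case: (ltngtP a b) => // lt_ab; move: lt_ab; rewrite -hmono e ltnn.
rewrite wedge_vecE big_imset /=; last by move=> a b _ _; apply: hinj.
rewrite (expand_det_col _ ord0) (eq_bigl xpredT) => [|a]; last by rewrite inE.
apply: eq_bigr => a _; rewrite !mxE /cofactor addn0.
have -> : sign_below (h @: setT) (h a) = (-1) ^+ a.
  rewrite /sign_below -[in RHS]card_ord_lt -(card_imset _ hinj); congr (_ ^+ _).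
  apply: eq_card => t; rewrite !inE; apply/andP/imsetP => [[/imsetP[b _ ->] lt]|[b]].
    by exists b; rewrite // inE -hmono.
  by rewrite inE => lt ->; split; [rewrite imset_f ?inE | rewrite hmono].
have -> : h @: setT :\ h a = (fun b => h (lift a b)) @: setT.
  apply/setP => t; rewrite in_setD1; apply/andP/imsetP => [[nt /imsetP[b _ tb]]|[b _ ->]].
    subst t; case: (unliftP a b) => [c ->|ab]; first by exists c.
    by move: nt; rewrite ab eqxx.
  by rewrite (inj_eq hinj) eq_sym neq_lift imset_f ?inE.
rewrite (IH vs) //; last by move=> b1 b2; rewrite hmono /= ltnNge leq_bump2 -ltnNge.
rewrite mulrCA mulrA; congr (_ * _ * _).
by congr (\det _); apply/matrixP => i j; rewrite !mxE lift0.
Qed.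

Lemma wedge_vecs_top vs : size vs = r ->
  wedge_vecs vs setT = \det (\matrix_(i, j < r) (nth (fun _ => 0) vs j) i).
Proof. by move=> sz; rewrite -[setT]imset_id (wedge_vecs_minor sz). Qed.

Lemma card_below_setU1 S i l : i \notin S ->
  #|[set t in i |: S | (t < l)%N]| = ((i < l)%N + #|[set t in S | (t < l)%N]|)%N.
Proof.
move=> iS; rewrite (cardsD1 i) !inE eqxx /=; congr (_ + _)%N.
by apply: eq_card => t; rewrite !inE; case: (eqVneq t i) => [->|] //=; rewrite (negPf iS).
Qed.

Lemma card_below_setD1 S i l : l \in S ->
  #|[set t in S | (t < i)%N]| = ((l < i)%N + #|[set t in S :\ l | (t < i)%N]|)%N.
Proof.
move=> lS; rewrite (cardsD1 l) !inE lS /=; congr (_ + _)%N.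
by apply: eq_card => t; rewrite !inE; case: (eqVneq t l).
Qed.

Lemma sign_below_cross S i l : i \notin S -> l \in S ->
  sign_below S i * sign_below (i |: S) l = - (sign_below S l * sign_below (S :\ l) i).
Proof.
move=> iS lS; rewrite /sign_below card_below_setU1 // (card_below_setD1 i lS) !exprD.
have il : i != l by apply: contraNneq iS => ->.
have : ((i < l)%N + (l < i)%N)%N = 1%N.
  by case: (ltngtP i l) => // e; move: il; rewrite (val_inj e) eqxx.
by case: (i < l)%N; case: (l < i)%N => // _; rewrite ?expr0 ?expr1; ring.
Qed.

Variable f : 'I_r -> R.

Lemma koszul_dE X S :
  koszul_d f X S = \sum_(i | i \notin S) sign_below S i * f i * X (i |: S).
Proof. by rewrite ffunE. Qed.

Lemma koszul_d_wedge_vec v X S : koszul_d f (wedge (ext_vec v) X) S =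
  (\sum_i v i * f i) * X S - wedge (ext_vec v) (koszul_d f X) S.
Proof.
have sq1 l : sign_below S l * sign_below S l = 1 by rewrite -expr2 sqrr_sign.
pose C := \sum_(i | i \notin S) \sum_(l in S)
  sign_below S i * sign_below (i |: S) l * f i * v l * X ((i |: S) :\ l).
have dvX : koszul_d f (wedge (ext_vec v) X) S = \sum_(i | i \notin S) v i * f i * X S + C.
  rewrite koszul_dE /C -big_split; apply: eq_bigr => i iS.
  rewrite wedge_vecE (big_setD1 i (setU11 i S)) (setU1K iS) sign_belowU1 mulrDr.
  congr (_ + _); last by rewrite mulr_sumr; apply: eq_bigr => l _; ring.
  by rewrite -[RHS]mul1r -(sq1 i); ring.
have vdX : wedge (ext_vec v) (koszul_d f X) S = \sum_(i in S) v i * f i * X S - C.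
  rewrite wedge_vecE /C exchange_big /= -sumrB; apply: eq_bigr => l lS.
  rewrite koszul_dE (bigD1 l) /=; last by rewrite setD11.
  rewrite (setD1K lS) sign_belowD1 mulrDr -sumrN; congr (_ + _).
    by rewrite -[RHS]mul1r -(sq1 l); ring.
  rewrite mulr_sumr (eq_bigl (fun i => i \notin S)) => [|i]; last first.
    by rewrite !inE; case: (eqVneq i l) => [->|_] /=; rewrite ?lS ?andbF ?andbT.
  apply: eq_bigr => i iS.
  have il : i != l by apply: contraNneq iS => ->.
  have -> : (i |: S) :\ l = i |: (S :\ l).
    apply/setP => t; rewrite !inE.
    by case: (eqVneq t l) => [->|] //=; rewrite eq_sym (negPf il).
  by rewrite (sign_below_cross iS lS); ring.
by rewrite dvX vdX mulr_suml [X in _ = X - _](bigID (fun i => i \in S)) /=; ring.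
Qed.

End DegreeOne.

Section Ideals.
Variable R : comPzRingType.
Implicit Types G J : R -> Prop.

Lemma ideal_gen_ideal G : is_ideal (ideal_gen G).
Proof.
split=> [J [] // | x y Gx Gy J hJ sGJ | b x Gx J hJ sGJ]; case: (hJ) => _ JD JM.
  by apply: JD; [apply: Gx | apply: Gy].
by apply: JM; apply: Gx.
Qed.

Lemma sub_ideal_gen G x : G x -> ideal_gen G x.
Proof. by move=> Gx J _; apply. Qed.

Lemma ideal_gen_min G J : is_ideal J -> (forall y, G y -> J y) ->
  forall x, ideal_gen G x -> J x.
Proof. by move=> hJ sGJ x; apply. Qed.

Lemma ideal0 J : is_ideal J -> J 0.
Proof. by case. Qed.

Lemma idealD J x y : is_ideal J -> J x -> J y -> J (x + y).
Proof. by case=> _ JD _; apply: JD. Qed.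

Lemma idealM J b x : is_ideal J -> J x -> J (b * x).
Proof. by case=> _ _ JM; apply: JM. Qed.

Lemma ideal_of_gens_lincomb s (a : 'I_s -> R) y :
  ideal_of_gens a y -> exists b : 'I_s -> R, y = \sum_j b j * a j.
Proof.
have hJ : is_ideal (fun y => exists b : 'I_s -> R, y = \sum_j b j * a j).
  split=> [|_ _ [b1 ->] [b2 ->] | d _ [b ->]].
  - by exists (fun _ => 0); rewrite big1 // => j _; rewrite mul0r.
  - by exists (fun j => b1 j + b2 j); rewrite -big_split; apply: eq_bigr => j _; rewrite mulrDl.
  - by exists (fun j => d * b j); rewrite mulr_sumr; apply: eq_bigr => j _; rewrite mulrA.
move=> y_gen; apply: y_gen hJ _ => _ [j ->]; exists (fun l => (l == j)%:R).
by rewrite (bigD1 j) //= eqxx mul1r big1 ?addr0 // => l /negPf ->; rewrite mul0r.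
Qed.

End Ideals.

Lemma prod_top_subr (R : comPzRingType) (r : nat) (A B B' : ext R r -> Prop) :
  (forall y, B y -> B' y) -> forall x, prod_top A B x -> prod_top A B' x.
Proof.
move=> sBB'; apply: ideal_gen_min; first exact: ideal_gen_ideal.
move=> _ [j [x [y [le_jr Ax [By hy] ->]]]].
by apply: sub_ideal_gen; exists j, x, y; split => //; split => //; apply: sBB'.
Qed.

Fixpoint all_prop (T : Type) (P : T -> Prop) (xs : seq T) : Prop :=
  if xs is x :: xs' then P x /\ all_prop P xs' else True.

Lemma all_prop_cat (T : Type) (P : T -> Prop) xs ys :
  all_prop P xs -> all_prop P ys -> all_prop P (xs ++ ys).
Proof. by elim: xs => [|x xs IH] //= [Px Pxs] Pys; split => //; apply: IH. Qed.

Lemma all_prop_nth (T : Type) (P : T -> Prop) x0 xs k :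
  all_prop P xs -> (k < size xs)%N -> P (nth x0 xs k).
Proof. by elim: xs k => [|x xs IH] [|k] //= [Px Pxs] lt_k_xs; last exact: IH. Qed.

Lemma all_prop_map (T U : Type) (P : U -> Prop) (F : T -> U) xs :
  (forall x, P (F x)) -> all_prop P (map F xs).
Proof. by move=> PF; elim: xs => //= x xs IH; split. Qed.

Section Cycles.
Variables (R : comPzRingType) (r : nat) (f : 'I_r -> R).
Local Notation E := (ext R r).

Definition is_cycle1 (v : 'I_r -> R) : Prop := \sum_i v i * f i = 0.

Lemma cycles_ext_one : cycles f (ext_one R r).
Proof.
apply/ffunP => S; rewrite koszul_dE [RHS]ffunE big1 // => i _.
have /negPf iS_neq0 : i |: S != set0 by apply/set0Pn; exists i; rewrite setU11.
by rewrite ffunE iS_neq0 mulr0.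
Qed.

Lemma cycles_wedge_vec v X : is_cycle1 v -> cycles f X -> cycles f (wedge (ext_vec v) X).
Proof.
move=> v_cyc X_cyc; apply/ffunP => S.
by rewrite koszul_d_wedge_vec v_cyc X_cyc wedge_vecE !ffunE mul0r sub0r big1 ?oppr0 //;
  move=> i _; rewrite ffunE mulr0.
Qed.

Lemma cycles_wedge_vecs zs : all_prop is_cycle1 zs -> cycles f (wedge_vecs zs).
Proof.
elim: zs => [_|z zs IH [z_cyc zs_cyc]]; first exact: cycles_ext_one.
exact: cycles_wedge_vec (IH zs_cyc).
Qed.

Lemma Z1_ext_vec v : is_cycle1 v -> Z1 f (ext_vec v).
Proof.
move=> v_cyc; split; first exact: ext_vec_homog.
by rewrite -(wedge1r (ext_vec v)); apply: cycles_wedge_vec => //; apply: cycles_ext_one.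
Qed.

(* The boundary of a degree-one x is its coefficient at [set0], [\sum_i x_i f_i]. *)
Lemma Z1_coefs x : Z1 f x ->
  x = ext_vec (fun i => x [set i]) /\ is_cycle1 (fun i => x [set i]).
Proof.
case=> x_homog dx; split.
  apply/ffunP => S; rewrite ext_vecE.
  have [/cards1P[i ->]|nS] := boolP (#|S| == 1%N); last first.
    rewrite x_homog // big1 // => i _.
    by case: eqP => // eS; move: nS; rewrite eS cards1.
  rewrite (bigD1 i) //= eqxx big1 ?addr0 // => l nl.
  by case: eqP => // /set1_inj il; move: nl; rewrite il eqxx.
have := congr1 (fun y : E => y set0) dx; rewrite koszul_dE ffunE /is_cycle1 => dx0.
rewrite -[RHS]dx0.
apply: eq_big => [i|i _]; rewrite /sign_below ?inE //.
have -> : [set t in (set0 : {set 'I_r}) | (t < i)%N] = set0 by apply/setP => t; rewrite !inE.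
by rewrite cards0 mul1r setU0 mulrC.
Qed.

Lemma Z1alg_wedge_vecs zs : all_prop is_cycle1 zs -> Z1alg f (wedge_vecs zs).
Proof.
move=> zs_cyc P [P1 _ _ PW] sZ1P; elim: zs zs_cyc => [|z zs IH] //= [z_cyc zs_cyc].
by apply: PW; [apply: sZ1P; apply: Z1_ext_vec | apply: IH].
Qed.

End Cycles.

Section RelationSpan.
Variables (R : comPzRingType) (r s : nat) (f : 'I_r -> R) (a : 'I_s -> R).
Local Notation E := (ext R r).
Local Notation is_relation := (quot_relation f a).

Lemma is_relation_cycle v : is_cycle1 f v -> is_relation v.
Proof. by move=> v_cyc; rewrite /quot_relation v_cyc; exact: ideal0 (ideal_gen_ideal _). Qed.

Inductive rel_span : E -> Prop :=
  | rel_span_wedge_vecs vs : all_prop is_relation vs -> rel_span (wedge_vecs vs)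
  | rel_span_add x y : rel_span x -> rel_span y -> rel_span (ext_add x y)
  | rel_span_scale b x : rel_span x -> rel_span (ext_scale b x).

Lemma rel_span_wedge x y : rel_span x -> rel_span y -> rel_span (wedge x y).
Proof.
move=> + y_span; elim=> [us us_rel|x1 x2 _ IH1 _ IH2|b x1 _ IH].
- elim: y_span => [ws ws_rel|y1 y2 _ IH1 _ IH2|b y1 _ IH].
  + by rewrite -wedge_vecs_cat; apply: rel_span_wedge_vecs; apply: all_prop_cat.
  + by rewrite wedgeDr; apply: rel_span_add.
  + by rewrite wedgeZr; apply: rel_span_scale.
- by rewrite wedgeDl; apply: rel_span_add.
- by rewrite wedgeZl; apply: rel_span_scale.
Qed.

Lemma rel_span_subalg_closed : Defs.subalg_closed rel_span.
Proof.
split; [exact: (@rel_span_wedge_vecs [::]) | exact: rel_span_add |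
        exact: rel_span_scale | exact: rel_span_wedge].
Qed.

Lemma rel_span_ext_vec v : is_relation v -> rel_span (ext_vec v).
Proof.
by move=> v_rel; rewrite -(wedge1r (ext_vec v)); apply: (@rel_span_wedge_vecs [:: v]).
Qed.

Lemma Z1alg_sub_rel_span x : Z1alg f x -> rel_span x.
Proof.
apply; first exact: rel_span_subalg_closed.
move=> y /Z1_coefs[y_eq y_cyc]; rewrite y_eq.
by apply: rel_span_ext_vec; apply: is_relation_cycle.
Qed.

Lemma Gamma_sub_rel_span (c : 'M[R]_(r, s)) :
  (forall j, a j = \sum_i c i j * f i) -> forall x, Gamma c x -> rel_span x.
Proof.
move=> ha x; apply; first exact: rel_span_subalg_closed.
move=> _ [j ->]; apply: rel_span_ext_vec.
by rewrite /quot_relation -ha; apply: sub_ideal_gen; exists j.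
Qed.

Lemma rel_span_top x : rel_span x -> Fitt0_quot f a (x setT).
Proof.
have Fitt_ideal := ideal_gen_ideal (fun c0 => exists M : 'M[R]_r,
  (forall k : 'I_r, is_relation (fun i => M i k)) /\ c0 = \det M).
elim=> [vs vs_rel|x1 x2 _ IH1 _ IH2|b x1 _ IH]; last 2 first.
- by rewrite ffunE; apply: idealD Fitt_ideal IH1 IH2.
- by rewrite ffunE; apply: idealM Fitt_ideal IH.
have [sz|nsz] := eqVneq (size vs) r; last first.
  by rewrite wedge_vecs_homog ?cardsT ?card_ord 1?eq_sym //; apply: ideal0 Fitt_ideal.
rewrite wedge_vecs_top //; apply: sub_ideal_gen.
exists (\matrix_(i, j < r) (nth (fun _ => 0) vs j) i); split => // k.
rewrite /quot_relation (eq_bigr (fun i => nth (fun _ => 0) vs k i * f i)) => [|i _].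
  by have := all_prop_nth (fun _ => 0) vs_rel; rewrite sz => /(_ k (ltn_ord k)).
by rewrite mxE.
Qed.

Lemma prod_top_sub_Fitt0 (A B : E -> Prop) :
  (forall x, A x -> rel_span x) -> (forall y, B y -> rel_span y) ->
  forall x, prod_top A B x -> Fitt0_quot f a x.
Proof.
move=> sA sB; apply: ideal_gen_min; first exact: ideal_gen_ideal.
move=> _ [j [x [y [_ [Ax _] [By _] ->]]]].
by apply: rel_span_top; apply: rel_span_wedge; [apply: sA | apply: sB].
Qed.

End RelationSpan.

Section GammaCycleSpan.
Variables (R : comPzRingType) (r s : nat).
Variables (f : 'I_r -> R) (a : 'I_s -> R) (c : 'M[R]_(r, s)).
Hypothesis ha : forall j, a j = \sum_i c i j * f i.
Local Notation E := (ext R r).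

Definition is_coef_column (v : 'I_r -> R) : Prop := exists j, v = fun i => c i j.

Inductive gamma_cycle_span : E -> Prop :=
  | gamma_cycle_span_gen gs zs : all_prop is_coef_column gs -> all_prop (is_cycle1 f) zs ->
      gamma_cycle_span (wedge (wedge_vecs gs) (wedge_vecs zs))
  | gamma_cycle_span_add x y :
      gamma_cycle_span x -> gamma_cycle_span y -> gamma_cycle_span (ext_add x y)
  | gamma_cycle_span_scale b x : gamma_cycle_span x -> gamma_cycle_span (ext_scale b x).

Lemma gamma_cycle_span_wedge_zeta j X :
  gamma_cycle_span X -> gamma_cycle_span (wedge (zeta c j) X).
Proof.
elim=> [gs zs gs_col zs_cyc|x y _ IHx _ IHy|b x _ IH].
- by rewrite -wedgeA; apply: (@gamma_cycle_span_gen (_ :: gs)) => //; split => //; exists j.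
- by rewrite wedgeDr; apply: gamma_cycle_span_add.
- by rewrite wedgeZr; apply: gamma_cycle_span_scale.
Qed.

Lemma gamma_cycle_span_wedge_cycle z X : is_cycle1 f z ->
  gamma_cycle_span X -> gamma_cycle_span (wedge (ext_vec z) X).
Proof.
move=> z_cyc; elim=> [gs zs gs_col zs_cyc|x y _ IHx _ IHy|b x _ IH].
- rewrite -wedgeA (wedgeC (ext_vec_homog z) (wedge_vecs_homog (vs := gs))) wedgeZl wedgeA.
  by apply: gamma_cycle_span_scale; apply: (@gamma_cycle_span_gen gs (z :: zs)).
- by rewrite wedgeDr; apply: gamma_cycle_span_add.
- by rewrite wedgeZr; apply: gamma_cycle_span_scale.
Qed.

Lemma gamma_cycle_span_wedge_comb (l : seq 'I_s) (b : 'I_s -> R) v X :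
  is_cycle1 f (fun i => v i - \sum_(j <- l) b j * c i j) ->
  gamma_cycle_span X -> gamma_cycle_span (wedge (ext_vec v) X).
Proof.
elim: l v => [|j l IH] v v_cyc X_span.
  rewrite (@eq_ext_vec _ _ v (fun i => v i - \sum_(j <- [::]) b j * c i j)) => [|i].
    exact: gamma_cycle_span_wedge_cycle.
  by rewrite big_nil subr0.
rewrite (@eq_ext_vec _ _ v (fun i => b j * c i j + (v i - b j * c i j))) => [|i]; last first.
  by rewrite addrC subrK.
rewrite ext_vecD ext_vecZ wedgeDl wedgeZl; apply: gamma_cycle_span_add.
  exact/gamma_cycle_span_scale/gamma_cycle_span_wedge_zeta.
apply: IH X_span; move: v_cyc; rewrite /is_cycle1.
by under eq_bigr do rewrite big_cons opprD addrA.
Qed.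

(* If [\sum_i v_i f_i = \sum_j b_j a_j], then [v - \sum_j b_j (c_ij)_i] is a cycle. *)
Lemma gamma_cycle_span_wedge_relation v X : quot_relation f a v ->
  gamma_cycle_span X -> gamma_cycle_span (wedge (ext_vec v) X).
Proof.
move=> /ideal_of_gens_lincomb[b vf_eq]; apply: (gamma_cycle_span_wedge_comb (b := b)).
rewrite /is_cycle1; under eq_bigr do rewrite mulrBl.
rewrite sumrB vf_eq; apply/eqP; rewrite subr_eq0; apply/eqP.
under eq_bigr do rewrite ha mulr_sumr.
rewrite exchange_big; apply: eq_bigr => i _; rewrite mulr_suml.
by apply: eq_bigr => j _; rewrite mulrA.
Qed.

Lemma gamma_cycle_span_wedge_vecs vs :
  all_prop (quot_relation f a) vs -> gamma_cycle_span (wedge_vecs vs).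
Proof.
elim: vs => [_|v vs IH [v_rel vs_rel]] /=.
  by rewrite -(wedge1l (ext_one R r)); apply: (@gamma_cycle_span_gen [::] [::]).
exact: gamma_cycle_span_wedge_relation (IH vs_rel).
Qed.

Lemma Gamma_wedge_vecs gs : all_prop is_coef_column gs -> Gamma c (wedge_vecs gs).
Proof.
move=> gs_col P [P1 _ _ PW] sGP; elim: gs gs_col => [|g gs IH] //= [[j ->] gs_col].
by apply: PW; [apply: sGP; exists j | apply: IH].
Qed.

Section TopDegree.
Variable B : E -> Prop.
Hypothesis B_cycle_products : forall zs, all_prop (is_cycle1 f) zs -> B (wedge_vecs zs).

Lemma gamma_cycle_span_top X : gamma_cycle_span X -> prod_top (Gamma c) B (X setT).
Proof.
have prod_ideal := @ideal_gen_ideal R (fun c0 => exists (j : nat) (x y : E),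
  [/\ (j <= r)%N, Gamma c x /\ homog j x, B y /\ homog (r - j) y & c0 = wedge x y setT]).
elim=> [gs zs gs_col zs_cyc|x y _ IHx _ IHy|b x _ IH]; last 2 first.
- by rewrite ffunE; apply: idealD prod_ideal IHx IHy.
- by rewrite ffunE; apply: idealM prod_ideal IH.
have [sz|nsz] := eqVneq (size gs + size zs)%N r; last first.
  rewrite -wedge_vecs_cat wedge_vecs_homog ?cardsT ?card_ord ?size_cat 1?eq_sym //.
  exact: ideal0 prod_ideal.
have [le_gs_r r_sub_gs] : (size gs <= r)%N /\ (r - size gs)%N = size zs by lia.
apply: sub_ideal_gen; exists (size gs), (wedge_vecs gs), (wedge_vecs zs); split => //.
- by split; [apply: Gamma_wedge_vecs | apply: wedge_vecs_homog].
- by split; [apply: B_cycle_products | rewrite r_sub_gs; apply: wedge_vecs_homog].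
Qed.

Lemma Fitt0_sub_prod_top x : Fitt0_quot f a x -> prod_top (Gamma c) B x.
Proof.
apply: ideal_gen_min; first exact: ideal_gen_ideal.
move=> _ [M [M_rel ->]].
pose vs := [seq (fun i => M i k) | k <- enum 'I_r].
have sz : size vs = r by rewrite size_map size_enum_ord.
have -> : \det M = wedge_vecs vs setT.
  rewrite wedge_vecs_top //; congr (\det _); apply/matrixP => i j.
  by rewrite mxE (nth_map j) ?size_enum_ord // nth_ord_enum.
apply: gamma_cycle_span_top; apply: gamma_cycle_span_wedge_vecs.
exact: all_prop_map.
Qed.

End TopDegree.

End GammaCycleSpan.

Unset Implicit Arguments.

Theorem proposition4p18 (R : comPzRingType) (r s : nat)
  (f : 'I_r -> R) (a : 'I_s -> R) (c : 'M[R]_(r, s))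
  (ha : forall j : 'I_s, a j = \sum_(i : 'I_r) c i j * f i) :
  (forall x : R, prod_top (Gamma c) (Z1alg f) x <-> Fitt0_quot f a x) /\
  ((forall z : ext R r, cycles f z -> Z1alg f z) ->
     forall x : R, Kitt c f x <-> Fitt0_quot f a x).
Proof.
have Gamma_rel := Gamma_sub_rel_span ha.
have Z1alg_rel := Z1alg_sub_rel_span a (f := f).
split=> [x | Z1alg_gen x]; split=> hx.
- exact: (prod_top_sub_Fitt0 Gamma_rel Z1alg_rel hx).
- exact: (Fitt0_sub_prod_top ha (@Z1alg_wedge_vecs _ _ f) hx).
- exact: (prod_top_sub_Fitt0 Gamma_rel Z1alg_rel (prod_top_subr Z1alg_gen hx)).
- exact: (Fitt0_sub_prod_top ha (@cycles_wedge_vecs _ _ f) hx).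
Qed.
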